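(* Given $\phi\in\mathcal{L}_{\Box\!\!\rightarrow}$ and $\Gamma,\Delta\subseteq\mathcal{L}_\Box$, we have $\Gamma\models_{\mathsf{FSK}^d}\Delta$ iff $Tr_\phi(\Gamma)\models_{\mathsf{N4CK}}Tr_\phi(\Delta)$.
   Context: $\mathcal{L}_\Box$ is built from propositional variables with $\wedge,\vee,\to$, strong negation $\sim$, and a unary modality $\Box$; $\mathcal{L}_{\Box\!\!\rightarrow}$ is built likewise but with a binary would-conditional $\Box\!\!\rightarrow$ instead of $\Box$. $\mathsf{FSK}^d$ is the modal logic over $\mathcal{L}_\Box$ given by Nelsonian modal models $(W,\leq,R,V^+,V^-)$: $\leq$ a preorder, $V^\pm$ assigning upward-closed sets, $R\subseteq W\times W$ with (i) $w\leq w'$ and $R(w,v)$ imply $R(w',v')$ for some $v'\geq v$, (ii) $R(w,v)$ and $v\leq v'$ imply $R(w',v')$ for some $w'\geq w$; verification/falsification as in Nelson's logic $\mathsf{N4}$ (atoms by $V^\pm$; $\wedge$ verified iff both verified, falsified iff one falsified; $\vee$ dually; $\sim$ swaps; $w\models^+\psi\to\chi$ iff for all $v\geq w$, $v\models^+\psi$ implies $v\models^+\chi$; $w\models^-\psi\to\chi$ iff $w\models^+\psi$ and $w\models^-\chi$), plus $w\models^+\Box\psi$ iff for all $v\geq w$ and $u$ with $R(v,u)$, $u\models^+\psi$, and $w\models^-\Box\psi$ iff some $u$ has $R(w,u)$ and $u\models^-\psi$. $\mathsf{N4CK}$ is the analogous conditional logic over $\mathcal{L}_{\Box\!\!\rightarrow}$: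 models $(W,\leq,R,V^+,V^-)$ with $R\subseteq W\times(\mathcal{P}(W)\times\mathcal{P}(W))\times W$ satisfying (i),(ii) for each $R_{(X,Y)}$; $w\models^+\psi\Box\!\!\rightarrow\chi$ iff for all $v\geq w$ and $u$ with $R_{\|\psi\|}(v,u)$, $u\models^+\chi$; $w\models^-\psi\Box\!\!\rightarrow\chi$ iff some $u$ has $R_{\|\psi\|}(w,u)$ and $u\models^-\chi$, where $\|\psi\|=(\{w\mid w\models^+\psi\},\{w\mid w\models^-\psi\})$. In both logics $\Gamma\models\Delta$ iff no pointed model verifies all of $\Gamma$ and none of $\Delta$. For fixed $\phi\in\mathcal{L}_{\Box\!\!\rightarrow}$, $Tr_\phi:\mathcal{L}_\Box\to\mathcal{L}_{\Box\!\!\rightarrow}$ is defined by $Tr_\phi(p)=p$, $Tr_\phi(\sim\psi)=\sim Tr_\phi(\psi)$, $Tr_\phi(\psi\ast\chi)=Tr_\phi(\psi)\ast Tr_\phi(\chi)$ for $\ast\in\{\wedge,\vee,\to\}$, and $Tr_\phi(\Box\psi)=\phi\Box\!\!\rightarrow Tr_\phi(\psi)$. *)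

Set Implicit Arguments.

Inductive fmB : Type :=
  | VarB : nat -> fmB
  | AndB : fmB -> fmB -> fmB
  | OrB  : fmB -> fmB -> fmB
  | ImpB : fmB -> fmB -> fmB
  | NegB : fmB -> fmB
  | BoxB : fmB -> fmB.

Inductive fmC : Type :=
  | VarC : nat -> fmC
  | AndC : fmC -> fmC -> fmC
  | OrC  : fmC -> fmC -> fmC
  | ImpC : fmC -> fmC -> fmC
  | NegC : fmC -> fmC
  | CondC : fmC -> fmC -> fmC.

Record NModel := {
  nW : Type;
  nle : nW -> nW -> Prop;
  nle_refl : forall w, nle w w;
  nle_trans : forall u v w, nle u v -> nle v w -> nle u w;
  nR : nW -> nW -> Prop;
  nVp : nat -> nW -> Prop;
  nVn : nat -> nW -> Prop;
  nVp_up : forall p w w', nle w w' -> nVp p w -> nVp p w';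
  nVn_up : forall p w w', nle w w' -> nVn p w -> nVn p w';
  nR_i : forall w w' v, nle w w' -> nR w v -> exists v', nle v v' /\ nR w' v';
  nR_ii : forall w v v', nR w v -> nle v v' -> exists w', nle w w' /\ nR w' v'
}.

Fixpoint verB (M : NModel) (w : nW M) (f : fmB) {struct f} : Prop :=
  match f with
  | VarB p => nVp M p w
  | AndB a b => verB M w a /\ verB M w b
  | OrB a b => verB M w a \/ verB M w b
  | ImpB a b => forall v, nle M w v -> verB M v a -> verB M v b
  | NegB a => falB M w a
  | BoxB a => forall v u, nle M w v -> nR M v u -> verB M u a
  end
with falB (M : NModel) (w : nW M) (f : fmB) {struct f} : Prop :=
  match f with
  | VarB p => nVn M p w
  | AndB a b => falB M w a \/ falB M w b
  | OrB a b => falB M w a /\ falB M w b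
  | ImpB a b => verB M w a /\ falB M w b
  | NegB a => verB M w a
  | BoxB a => exists u, nR M w u /\ falB M u a
  end.

Record CModel := {
  cW : Type;
  cle : cW -> cW -> Prop;
  cle_refl : forall w, cle w w;
  cle_trans : forall u v w, cle u v -> cle v w -> cle u w;
  cR : ((cW -> Prop) * (cW -> Prop)) -> cW -> cW -> Prop;
  cVp : nat -> cW -> Prop;
  cVn : nat -> cW -> Prop;
  cVp_up : forall p w w', cle w w' -> cVp p w -> cVp p w';
  cVn_up : forall p w w', cle w w' -> cVn p w -> cVn p w';
  cR_i : forall XY w w' v, cle w w' -> cR XY w v -> exists v', cle v v' /\ cR XY w' v';
  cR_ii : forall XY w v v', cR XY w v -> cle v v' -> exists w', cle w w' /\ cR XY w' v'
}.

Fixpoint verC (M : CModel) (w : cW M) (f : fmC) {struct f} : Prop :=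
  match f with
  | VarC p => cVp M p w
  | AndC a b => verC M w a /\ verC M w b
  | OrC a b => verC M w a \/ verC M w b
  | ImpC a b => forall v, cle M w v -> verC M v a -> verC M v b
  | NegC a => falC M w a
  | CondC a b =>
      forall v u, cle M w v ->
        cR M (fun x => verC M x a, fun x => falC M x a) v u -> verC M u b
  end
with falC (M : CModel) (w : cW M) (f : fmC) {struct f} : Prop :=
  match f with
  | VarC p => cVn M p w
  | AndC a b => falC M w a \/ falC M w b
  | OrC a b => falC M w a /\ falC M w b
  | ImpC a b => verC M w a /\ falC M w b
  | NegC a => verC M w a
  | CondC a b =>
      exists u, cR M (fun x => verC M x a, fun x => falC M x a) w u /\ falC M u b
  end.

Definition conseqB (G D : fmB -> Prop) : Prop :=
  ~ exists (M : NModel) (w : nW M),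
      (forall f, G f -> verB M w f) /\ (forall f, D f -> ~ verB M w f).

Definition conseqC (G D : fmC -> Prop) : Prop :=
  ~ exists (M : CModel) (w : cW M),
      (forall f, G f -> verC M w f) /\ (forall f, D f -> ~ verC M w f).

Fixpoint Tr (phi : fmC) (f : fmB) : fmC :=
  match f with
  | VarB p => VarC p
  | AndB a b => AndC (Tr phi a) (Tr phi b)
  | OrB a b => OrC (Tr phi a) (Tr phi b)
  | ImpB a b => ImpC (Tr phi a) (Tr phi b)
  | NegB a => NegC (Tr phi a)
  | BoxB a => CondC phi (Tr phi a)
  end.

Definition TrSet (phi : fmC) (G : fmB -> Prop) : fmC -> Prop :=
  fun g => exists f, G f /\ g = Tr phi f.


(* Both directions are model transformations on the same frame that preserve
   verification and falsification along Tr_phi.  A conditional model becomes a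
   modal one by keeping only the relation R_||phi||, which is exactly the one
   read by the translated boxes; a modal model becomes a conditional one by
   using its relation R for every proposition (X, Y). *)

Definition modal_reduct (M : CModel) (phi : fmC) : NModel := {|
  nW := cW M; nle := cle M; nle_refl := cle_refl M; nle_trans := cle_trans M;
  nR := cR M (fun x => verC M x phi, fun x => falC M x phi);
  nVp := cVp M; nVn := cVn M; nVp_up := cVp_up M; nVn_up := cVn_up M;
  nR_i := cR_i M _; nR_ii := cR_ii M _ |}.

Definition constant_cond_model (N : NModel) : CModel := {|
  cW := nW N; cle := nle N; cle_refl := nle_refl N; cle_trans := nle_trans N;
  cR := fun _ => nR N;
  cVp := nVp N; cVn := nVn N; cVp_up := nVp_up N; cVn_up := nVn_up N;
  cR_i := fun _ => nR_i N; cR_ii := fun _ => nR_ii N |}.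

Lemma modal_reduct_Tr (M : CModel) (phi : fmC) (f : fmB) :
  forall w : cW M,
    (verB (modal_reduct M phi) w f <-> verC M w (Tr phi f)) /\
    (falB (modal_reduct M phi) w f <-> falC M w (Tr phi f)).
Proof. induction f; intro w; simpl; firstorder. Qed.

Lemma constant_cond_model_Tr (N : NModel) (phi : fmC) (f : fmB) :
  forall w : nW N,
    (verB N w f <-> verC (constant_cond_model N) w (Tr phi f)) /\
    (falB N w f <-> falC (constant_cond_model N) w (Tr phi f)).
Proof. induction f; intro w; simpl; firstorder. Qed.

Lemma conseqC_Tr_of_conseqB (phi : fmC) (G D : fmB -> Prop) :
  conseqB G D -> conseqC (TrSet phi G) (TrSet phi D).
Proof.
  intros HGD [M [w [HG HD]]]. apply HGD.
  exists (modal_reduct M phi), w. split.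
  - intros f Hf. apply (modal_reduct_Tr M phi f w).
    apply HG. exists f; auto.
  - intros f Hf Hver. apply (HD (Tr phi f)).
    + exists f; auto.
    + apply (modal_reduct_Tr M phi f w); exact Hver.
Qed.

Lemma conseqB_of_conseqC_Tr (phi : fmC) (G D : fmB -> Prop) :
  conseqC (TrSet phi G) (TrSet phi D) -> conseqB G D.
Proof.
  intros HGD [N [w [HG HD]]]. apply HGD.
  exists (constant_cond_model N), w. split.
  - intros g [f [Hf ->]]. apply (constant_cond_model_Tr N phi f w), HG, Hf.
  - intros g [f [Hf ->]] Hver. apply (HD f Hf).
    apply (constant_cond_model_Tr N phi f w); exact Hver.
Qed.

Theorem proposition11 (phi : fmC) (G D : fmB -> Prop) :
  conseqB G D <-> conseqC (TrSet phi G) (TrSet phi D).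
Proof.
  split; [apply conseqC_Tr_of_conseqB | apply conseqB_of_conseqC_Tr].
Qed.
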